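(* Let $k\ge 3$, let $\sigma=\sigma_1\cdots\sigma_k\in\mathfrak S_k$ be a consecutive pattern, and let $1\text{-}\sigma$ denote the generalized pattern $1\text{-}(\sigma_1+1)(\sigma_2+1)\cdots(\sigma_k+1)$. Then $$\lim_{n\to\infty}\left(\frac{\alpha_n(1\text{-}\sigma)}{n!}\right)^{1/n}=\lim_{n\to\infty}\left(\frac{\alpha_n(\sigma)}{n!}\right)^{1/n},$$ and in particular the left-hand limit exists.
   Context: $\mathfrak S_n$ is the symmetric group on $\{1,\dots,n\}$, permutations in one-line notation. A generalized pattern of length $m$ is a permutation $\sigma_1\cdots\sigma_m\in\mathfrak S_m$ with, between each pair of adjacent entries, either a dash ''-'' or nothing. A permutation $\pi\in\mathfrak S_n$ contains it if there are indices $i_1<\dots<i_m$ with $i_{j+1}=i_j+1$ whenever there is no dash between $\sigma_j$ and $\sigma_{j+1}$, and with $\pi_{i_a}<\pi_{i_b}$ iff $\sigma_a<\sigma_b$ for all $a,b$; otherwise $\pi$ avoids it. A consecutive pattern has no dashes. $\alpha_n(\sigma)$ is the number of permutations in $\mathfrak S_n$ avoiding $\sigma$. *)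

From HB Require Import structures.
From mathcomp Require Import all_boot all_order all_algebra all_fingroup.
From mathcomp Require Import all_classical all_reals all_analysis.
Set Implicit Arguments. Unset Strict Implicit. Unset Printing Implicit Defensive.
Import Order.TTheory GRing.Theory Num.Theory.

(* A generalized pattern of length m is given by its entries
   pat : 'I_m -> nat (0-based values; only relative order matters) and
   dash : nat -> bool, where dash j (for j.+1 < m) says that there is a
   dash between the entries at (0-based) positions j and j.+1. *)

Definition gcontains (n m : nat) (pat : 'I_m -> nat) (dash : nat -> bool)
  (pi : 'S_n) : bool :=
  [exists f : {ffun 'I_m -> 'I_n},
    [&& [forall a : 'I_m, forall b : 'I_m, (a < b)%N ==> (f a < f b)%N],
        [forall a : 'I_m, forall b : 'I_m,
           ((a.+1 == b) && ~~ dash a) ==> (val (f b) == (f a).+1)] &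
        [forall a : 'I_m, forall b : 'I_m,
           (val (pi (f a)) < val (pi (f b)))%N == (pat a < pat b)%N]]].

Definition alpha (n m : nat) (pat : 'I_m -> nat) (dash : nat -> bool) : nat :=
  #|[set pi : 'S_n | ~~ gcontains pat dash pi]|.

Definition consec (k : nat) (s : 'S_k) : 'I_k -> nat := fun i => val (s i).
Definition no_dash : nat -> bool := fun _ => false.

(* The generalized pattern 1-(s_1+1)...(s_k+1) of length k+1 (0-based values:
   first entry 0, then s_i + 1), with a single dash after the first entry. *)
Definition one_dash_pat (k : nat) (s : 'S_k) : 'I_k.+1 -> nat :=
  fun i => match unlift ord0 i with
           | None => 0%N
           | Some j => (val (s j)).+1
           end.
Definition one_dash : nat -> bool := fun j => j == 0%N.

Local Open Scope ring_scope.
Definition growth_seq (R : realType) (a : nat -> nat) : nat -> R :=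
  fun n => ((a n)%:R / (n`!)%:R) `^ (n%:R)^-1.

From HB Require Import structures.
From mathcomp Require Import all_boot all_order all_algebra all_fingroup.
From mathcomp Require Import all_classical all_reals all_analysis.
From mathcomp Require Import zify ring lra.
Set Implicit Arguments. Unset Strict Implicit. Unset Printing Implicit Defensive.
Import Order.TTheory GRing.Theory Num.Theory numFieldNormedType.Exports.

(* Write a_n = alpha_n(1-s)/n! and b_n = alpha_n(s)/n!, and L = inf b_n^(1/n).
   Deleting the first entry of an occurrence of 1-s leaves an occurrence of s,
   so b_n <= a_n.  Splitting a permutation into a prefix and a suffix and
   standardizing both shows that b is submultiplicative, so b_n = O(c^n) for
   every c > L.  Splitting an avoider of 1-s of length n+1 at its minimum, the
   prefix avoids 1-s and the suffix avoids s, since the minimum completes any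
   occurrence of s after it; hence (n+1) a_(n+1) <= sum_j a_j b_(n-j).  For
   r > L this recurrence gives a_n <= K r^n by induction, so a_n^(1/n) is
   squeezed between b_n^(1/n) >= L and r + o(1). *)

Section WordContainment.
Variables (m : nat) (pat : 'I_m -> nat) (dash : nat -> bool).

Definition word_contains N (h : 'I_N -> nat) : bool :=
  [exists f : {ffun 'I_m -> 'I_N},
    [&& [forall a : 'I_m, forall b : 'I_m, (a < b)%N ==> (f a < f b)%N],
        [forall a : 'I_m, forall b : 'I_m,
           ((a.+1 == b) && ~~ dash a) ==> (val (f b) == (f a).+1)] &
        [forall a : 'I_m, forall b : 'I_m,
           (h (f a) < h (f b))%N == (pat a < pat b)%N]]].

Lemma gcontains_word N (pi : 'S_N) :
  gcontains pat dash pi = word_contains (fun i => val (pi i)).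
Proof. by []. Qed.

Lemma eq_word_contains N (h h' : 'I_N -> nat) :
  (forall i j, (h i < h j) = (h' i < h' j)) ->
  word_contains h = word_contains h'.
Proof.
move=> E; apply/existsP/existsP => -[f /and3P[H1 H2 H3]]; exists f;
  apply/and3P; split=> //; apply/forallP=> a; apply/forallP=> b;
  move/forallP: H3 => /(_ a) /forallP /(_ b); by rewrite E.
Qed.

Lemma word_contains_factor N M (e : 'I_M -> 'I_N) (c : nat) (h : 'I_N -> nat) :
  (forall i, val (e i) = c + val i) ->
  word_contains (fun i => h (e i)) -> word_contains h.
Proof.
move=> He /existsP[f /and3P[/forallP H1 /forallP H2 /forallP H3]].
apply/existsP; exists [ffun a => e (f a)]; apply/and3P; split;
  apply/forallP=> a; apply/forallP=> b; rewrite !ffunE.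
- apply/implyP=> ab; move/forallP: (H1 a) => /(_ b) /implyP /(_ ab).
  by rewrite !He ltn_add2l.
- apply/implyP=> ab; move/forallP: (H2 a) => /(_ b) /implyP /(_ ab) /eqP.
  by rewrite !He => ->; rewrite addnS.
- by move/forallP: (H3 a) => /(_ b).
Qed.

End WordContainment.

Section Standardization.
Variable m : nat.
Implicit Types h : 'I_m -> nat.

Definition rank h (i : 'I_m) : nat := #|[set j | h j < h i]|.

Lemma rank_lt h i : rank h i < m.
Proof.
have P : [set j | h j < h i] \proper [set: 'I_m].
  by apply/properP; split; [exact: finset.subsetT | exists i; rewrite ?inE ?ltnn].
by move: (proper_card P); rewrite cardsT card_ord.
Qed.

Lemma ltn_rank h i j : injective h -> (rank h i < rank h j) = (h i < h j).
Proof.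
move=> hinj; case: (ltngtP (h i) (h j)) => [lt|gt|eq].
- apply: proper_card; apply/properP; split.
    by apply/fintype.subsetP=> x; rewrite !inE => /ltn_trans; apply.
  by exists i; rewrite !inE ?ltnn.
- apply/negbTE; rewrite -leqNgt; apply: subset_leq_card.
  by apply/fintype.subsetP=> x; rewrite !inE => /ltn_trans; apply.
- by move/hinj: eq => ->; rewrite ltnn.
Qed.

Lemma rank_inj h : injective h -> injective (rank h).
Proof.
move=> hinj i j E; have := ltn_rank i j hinj; have := ltn_rank j i hinj.
rewrite E ltnn => A B.
by apply: hinj; apply/eqP; rewrite eqn_leq leqNgt -A leqNgt -B.
Qed.

Definition rank_ord h (i : 'I_m) : 'I_m := Ordinal (rank_lt h i).

(* On non-injective words, where [rank_ord h] need not be a permutation,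
   [std] falls back to the identity. *)
Definition std_fun h : 'I_m -> 'I_m :=
  if injectiveb (rank_ord h) then rank_ord h else id.

Lemma std_fun_inj h : injective (std_fun h).
Proof. by rewrite /std_fun; case: injectiveP => // _ x y. Qed.

Definition std h : 'S_m := perm (@std_fun_inj h).

Lemma stdE h : injective h -> forall i, val (std h i) = rank h i.
Proof.
move=> hinj i; rewrite /std permE /std_fun; case: injectiveP => // [] [] x y.
by move/(congr1 val) => /rank_inj; apply.
Qed.

Lemma ltn_std h : injective h -> forall i j,
  (val (std h i) < val (std h j)) = (h i < h j).
Proof. by move=> hinj i j; rewrite !stdE // ltn_rank. Qed.

Lemma rank_count h i : rank h i = count (fun v => v < h i) (codom h).
Proof.
rewrite /rank cardsE cardE /codom /image_mem count_map size_filter -enumT.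
by apply: eq_count => x; rewrite !inE.
Qed.

Lemma count_lt_sub (T : eqType) (a1 a2 : pred T) (s : seq T) x :
  subpred a1 a2 -> x \in s -> a2 x -> ~~ a1 x -> count a1 s < count a2 s.
Proof.
move=> sub12 + a2x a1x; elim: s => //= y s IH; rewrite inE => /orP[/eqP <-|xs].
  by rewrite a2x (negbTE a1x) add0n add1n ltnS sub_count.
by rewrite -addnS leq_add ?IH //; case: (a1 y) (@sub12 y) => // /(_ isT) ->.
Qed.

Lemma rank_codom_inj h1 h2 :
  injective h1 -> injective h2 -> codom h1 =i codom h2 ->
  rank h1 =1 rank h2 -> h1 =1 h2.
Proof.
move=> inj1 inj2 C E i.
have P : perm_eq (codom h1) (codom h2).
  by apply: uniq_perm => //; rewrite map_inj_uniq ?enum_uniq.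
have E1 : rank h1 i = count (fun v => v < h1 i) (codom h2).
  by rewrite rank_count; move/seq.permP: P => ->.
have E2 := rank_count h2 i.
have in1 : h1 i \in codom h2 by rewrite -C codom_f.
have in2 : h2 i \in codom h2 by rewrite codom_f.
have sub_lt v1 v2 : v1 < v2 -> subpred (fun v => v < v1) (fun v => v < v2).
  by move=> lt v /ltn_trans; apply.
case: (ltngtP (h1 i) (h2 i)) => // lt.
  by move: (count_lt_sub (sub_lt _ _ lt) in1 lt (negbT (ltnn _))); rewrite -E1 -E2 E ltnn.
by move: (count_lt_sub (sub_lt _ _ lt) in2 lt (negbT (ltnn _))); rewrite -E1 -E2 E ltnn.
Qed.

End Standardization.

Lemma leq_card_in_map (T U : finType) (S : {set T}) (D : {set U}) (F : T -> U) :
  {in S &, injective F} -> {in S, forall x, F x \in D} -> #|S| <= #|D|.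
Proof.
move=> inj sub; rewrite -(card_in_imset inj); apply: subset_leq_card.
by apply/fintype.subsetP=> y /imsetP[x xS ->]; exact: sub.
Qed.

Lemma codom_val_imset M N (g1 g2 : 'I_M -> 'I_N) :
  [set g1 i | i in 'I_M] = [set g2 i | i in 'I_M] ->
  codom (fun i => val (g1 i)) =i codom (fun i => val (g2 i)).
Proof.
move=> E x; apply/codomP/codomP => -[i ->].
  have: g1 i \in [set g2 i | i in 'I_M] by rewrite -E imset_f.
  by case/imsetP=> j _ ->; exists j.
have: g2 i \in [set g1 i | i in 'I_M] by rewrite E imset_f.
by case/imsetP=> j _ ->; exists j.
Qed.

Lemma shift_inj M N (e : 'I_M -> 'I_N) c :
  (forall i, val (e i) = c + val i) -> injective e.
Proof. by move=> He i j /(congr1 val); rewrite !He => /addnI /val_inj. Qed.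

Lemma val_perm_comp_inj N M (pi : 'S_N) (e : 'I_M -> 'I_N) :
  injective e -> injective (fun i => val (pi (e i))).
Proof. by move=> ei i j /val_inj /perm_inj /ei. Qed.

Lemma eq_on_factor N M (p1 p2 : 'S_N) (e : 'I_M -> 'I_N) :
  injective e ->
  [set p1 (e i) | i in 'I_M] = [set p2 (e i) | i in 'I_M] ->
  std (fun i => val (p1 (e i))) = std (fun i => val (p2 (e i))) ->
  forall i, p1 (e i) = p2 (e i).
Proof.
move=> ei Eimg Estd i; apply: val_inj.
apply: (rank_codom_inj (val_perm_comp_inj (pi := p1) ei) (val_perm_comp_inj (pi := p2) ei)).
  exact: codom_val_imset.
by move=> j; rewrite -!stdE ?Estd //; exact: val_perm_comp_inj.
Qed.

Lemma imset_rshift m n (pi : 'S_(m + n)) :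
  [set pi (rshift m j) | j in 'I_n] = ~: [set pi (lshift n i) | i in 'I_m].
Proof.
apply/setP=> y; rewrite inE; apply/imsetP/idP.
  case=> j _ ->; apply/imsetP => -[i _ /perm_inj /(congr1 val) /=].
  by move=> E; move: (ltn_ord i); rewrite -E; lia.
move=> yA; case: (splitP (pi^-1 y)%g) => [i|j] Ei.
  case/imsetP: yA; exists i => //.
  by rewrite -(permKV pi y); congr (pi _); apply: val_inj; rewrite /= -Ei.
by exists j => //; rewrite -(permKV pi y); congr (pi _); apply: val_inj; rewrite /= -Ei.
Qed.

Section Avoiders.
Variables (k : nat) (pat : 'I_k -> nat) (dash : nat -> bool).

Definition avoiders n := [set pi : 'S_n | ~~ gcontains pat dash pi].

Lemma alphaE n : alpha n pat dash = #|avoiders n|.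
Proof. by []. Qed.

Lemma alpha_le_fact n : alpha n pat dash <= n`!.
Proof. by rewrite alphaE -card_Sn; exact: max_card. Qed.

Lemma std_factor_avoids N M (pi : 'S_N) (e : 'I_M -> 'I_N) c :
  (forall i, val (e i) = c + val i) -> pi \in avoiders N ->
  std (fun i => val (pi (e i))) \in avoiders M.
Proof.
move=> He; rewrite !inE !gcontains_word; apply: contra => H.
apply: (word_contains_factor He).
by rewrite -(eq_word_contains _ _ (ltn_std (val_perm_comp_inj (pi := pi) (shift_inj He)))).
Qed.

(* A permutation is determined by the set of values of its left factor and the
   standardizations of both factors. *)
Lemma alpha_submult m n :
  alpha (m + n) pat dash <= 'C(m + n, m) * alpha m pat dash * alpha n pat dash.
Proof.
rewrite !alphaE.
pose F (pi : 'S_(m + n)) :=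
  ([set pi (lshift n i) | i in 'I_m],
   std (fun i => val (pi (lshift n i))),
   std (fun j => val (pi (rshift m j)))).
have -> : 'C(m + n, m) = #|[set A : {set 'I_(m + n)} | #|A| == m]|.
  by rewrite card_draws card_ord.
rewrite -!cardsX; apply: (@leq_card_in_map _ _ _ _ F).
  move=> p1 p2 _ _ [Eimg Eleft Eright].
  have Eimg' := imset_rshift p1; rewrite Eimg -imset_rshift in Eimg'.
  apply/permP => x; case: (splitP x) => [i|j] Ei.
    have -> : x = lshift n i by apply: val_inj.
    exact: (eq_on_factor (@lshift_inj m n) Eimg Eleft).
  have -> : x = rshift m j by apply: val_inj.
  exact: (eq_on_factor (@rshift_inj m n) Eimg' Eright).
move=> pi av; rewrite !inE /= card_imset; last by move=> i j /perm_inj /lshift_inj.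
rewrite card_ord eqxx /=.
by rewrite -!(@finset.in_set _ (fun p => ~~ gcontains pat dash p)) -!/(avoiders _)
  (std_factor_avoids (c := 0) _ av) // (std_factor_avoids (c := m) _ av).
Qed.

End Avoiders.

Section OneDashPattern.
Variables (k : nat) (s : 'S_k).

Lemma one_dash_pat_lift a : one_dash_pat s (lift ord0 a) = (val (s a)).+1.
Proof. by rewrite /one_dash_pat liftK. Qed.

Lemma one_dash_pat0 : one_dash_pat s ord0 = 0.
Proof. by rewrite /one_dash_pat unlift_none. Qed.

Lemma word_contains_one_dash_consec N (h : 'I_N -> nat) :
  word_contains (one_dash_pat s) one_dash h -> word_contains (consec s) no_dash h.
Proof.
case/existsP=> f /and3P[/forallP H1 /forallP H2 /forallP H3].
apply/existsP; exists [ffun a => f (lift ord0 a)]; apply/and3P; split;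
  apply/forallP=> a; apply/forallP=> b; rewrite !ffunE.
- apply/implyP=> ab; move/forallP: (H1 (lift ord0 a)) => /(_ (lift ord0 b)).
  by rewrite !lift0 ltnS ab.
- apply/implyP=> /andP[ab _].
  move/forallP: (H2 (lift ord0 a)) => /(_ (lift ord0 b)).
  by rewrite !lift0 eqSS ab /one_dash.
- move/forallP: (H3 (lift ord0 a)) => /(_ (lift ord0 b)).
  by rewrite !one_dash_pat_lift ltnS.
Qed.

Lemma alpha_consec_le_one_dash n :
  alpha n (consec s) no_dash <= alpha n (one_dash_pat s) one_dash.
Proof.
rewrite !alphaE; apply: subset_leq_card; apply/fintype.subsetP=> pi; rewrite !inE.
by rewrite !gcontains_word; apply: contra; apply: word_contains_one_dash_consec.
Qed.

Section SplitAtPosition.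
Variables (n : nat) (p : 'I_n.+1).

Definition prefix_pos (i : 'I_p) : 'I_n.+1 :=
  Ordinal (ltn_trans (ltn_ord i) (ltn_ord p)).

Lemma suffix_pos_subproof (j : 'I_(n - p)) : p.+1 + j < n.+1.
Proof. by move: (ltn_ord j) (ltn_ord p); lia. Qed.

Definition suffix_pos (j : 'I_(n - p)) : 'I_n.+1 := Ordinal (suffix_pos_subproof j).

Lemma prefix_posE i : prefix_pos i = 0 + i :> nat. Proof. by []. Qed.
Lemma suffix_posE j : suffix_pos j = p.+1 + j :> nat. Proof. by []. Qed.

Lemma prefix_pos_inj : injective prefix_pos. Proof. exact: shift_inj prefix_posE. Qed.
Lemma suffix_pos_inj : injective suffix_pos. Proof. exact: shift_inj suffix_posE. Qed.

Lemma split_posP (x : 'I_n.+1) :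
  [\/ exists i, x = prefix_pos i, x = p | exists j, x = suffix_pos j].
Proof.
case: (ltngtP x p) => [lt|gt|eq].
- by apply: Or31; exists (Ordinal lt); apply: val_inj.
- have lt : x - p.+1 < n - p by move: (ltn_ord x); lia.
  by apply: Or33; exists (Ordinal lt); apply: val_inj => /=; lia.
- by apply: Or32; apply: val_inj.
Qed.

Lemma perm_suffix_neq_min (pi : 'S_n.+1) j : pi p = ord0 -> pi (suffix_pos j) != 0 :> nat.
Proof.
move=> pi0; apply/eqP=> E; have : pi (suffix_pos j) = pi p by rewrite pi0; apply: val_inj; exact: E.
by move/perm_inj/(congr1 (@nat_of_ord _)); rewrite suffix_posE; lia.
Qed.

Lemma one_dash_of_consec_suffix (pi : 'S_n.+1) : pi p = ord0 ->
  word_contains (consec s) no_dash (fun j => val (pi (suffix_pos j))) ->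
  word_contains (one_dash_pat s) one_dash (fun x => val (pi x)).
Proof.
move=> pi0 /existsP[g /and3P[/forallP G1 /forallP G2 /forallP G3]].
apply/existsP.
exists [ffun a => if unlift ord0 a is Some j then suffix_pos (g j) else p].
apply/and3P; split; apply/forallP=> a; apply/forallP=> b; rewrite !ffunE;
  case: (unliftP ord0 a) => [a'|] ->; case: (unliftP ord0 b) => [b'|] ->;
  rewrite ?liftK ?unlift_none ?lift0 //=.
- apply/implyP; rewrite ltnS => ab.
  by move/forallP: (G1 a') => /(_ b') /implyP /(_ ab); rewrite ltn_add2l.
- by rewrite addSn ltnS leq_addr.
- apply/implyP; rewrite eqSS => /andP[ab _].
  move/forallP: (G2 a') => /(_ b'); rewrite ab /no_dash /= => /eqP E.
  by rewrite E addnS.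
- by rewrite andbF.
- by rewrite !one_dash_pat_lift ltnS; move/forallP: (G3 a') => /(_ b').
- by rewrite one_dash_pat_lift one_dash_pat0 pi0 ltn0.
- by rewrite one_dash_pat_lift one_dash_pat0 pi0 /= lt0n (perm_suffix_neq_min _ pi0).
- by rewrite one_dash_pat0 ltnn.
Qed.

Lemma imset_suffix_pos (pi : 'S_n.+1) : pi p = ord0 ->
  [set pi (suffix_pos j) | j in 'I_(n - p)] =
  [set y | (y \notin [set pi (prefix_pos i) | i in 'I_p]) && (y != ord0)].
Proof.
move=> pi0; apply/setP=> y; rewrite !inE; apply/imsetP/andP.
  case=> j _ ->; split; last by apply: contraNneq (perm_suffix_neq_min j pi0) => ->.
  apply/imsetP=> -[i _ /perm_inj /(congr1 (@nat_of_ord _))]; rewrite suffix_posE prefix_posE.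
  by move: (ltn_ord i); lia.
case=> yA y0; case: (split_posP (pi^-1 y)%g) => [[i Ei]|Ep|[j Ej]].
- by case/imsetP: yA; exists i => //; rewrite -Ei permKV.
- by move: y0; rewrite -(permKV pi y) Ep pi0 eqxx.
- by exists j => //; rewrite -Ej permKV.
Qed.

(* The prefix before the minimum avoids [1-s], the suffix after it avoids [s],
   and the permutation is recovered from the set of prefix values and the two
   standardizations. *)
Lemma card_avoiders_min_at :
  #|[set pi in avoiders (one_dash_pat s) one_dash n.+1 | pi p == ord0]| <=
  'C(n, p) * alpha p (one_dash_pat s) one_dash * alpha (n - p) (consec s) no_dash.
Proof.
rewrite !alphaE.
pose F (pi : 'S_n.+1) :=
  ([set pi (prefix_pos i) | i in 'I_p],
   std (fun i => val (pi (prefix_pos i))),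
   std (fun j => val (pi (suffix_pos j)))).
have -> : 'C(n, p) = #|[set A : {set 'I_n.+1} | A \subset [set~ ord0] & #|A| == p]|.
  by rewrite cards_draws cardsC1 card_ord.
rewrite -!cardsX; apply: (@leq_card_in_map _ _ _ _ F).
  move=> p1 p2; rewrite !inE => /andP[_ /eqP e1] /andP[_ /eqP e2] [Eimg Epre Esuf].
  have Eimg' : [set p1 (suffix_pos j) | j in 'I_(n - p)] =
               [set p2 (suffix_pos j) | j in 'I_(n - p)].
    by rewrite (imset_suffix_pos e1) (imset_suffix_pos e2) Eimg.
  apply/permP => x; case: (split_posP x) => [[i ->]|->|[j ->]].
  - exact: (eq_on_factor prefix_pos_inj Eimg Epre).
  - by rewrite e1 e2.
  - exact: (eq_on_factor suffix_pos_inj Eimg' Esuf).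
move=> pi; rewrite !inE => /andP[av /eqP pi0] /=.
rewrite -!andbA; apply/and4P; split.
- apply/fintype.subsetP=> y /imsetP[i _ ->]; rewrite !inE; apply/eqP=> E.
  have : pi (prefix_pos i) = pi p by rewrite E pi0.
  by move/perm_inj/(congr1 (@nat_of_ord _)); rewrite prefix_posE; move: (ltn_ord i); lia.
- by rewrite card_imset ?card_ord // => i j /perm_inj /prefix_pos_inj.
- have av' : pi \in avoiders (one_dash_pat s) one_dash n.+1 by rewrite inE.
  by have := std_factor_avoids prefix_posE av'; rewrite inE.
- have hinj := val_perm_comp_inj (pi := pi) suffix_pos_inj.
  rewrite gcontains_word (eq_word_contains _ _ (ltn_std hinj)).
  by move: av; rewrite gcontains_word; apply: contra; exact: one_dash_of_consec_suffix.
Qed.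

End SplitAtPosition.

Lemma alpha_one_dash_rec n :
  alpha n.+1 (one_dash_pat s) one_dash <=
  \sum_(p < n.+1) 'C(n, p) * alpha p (one_dash_pat s) one_dash *
                 alpha (n - p) (consec s) no_dash.
Proof.
rewrite alphaE -sum1_card (partition_big (fun pi : 'S_n.+1 => (pi^-1 ord0)%g) predT) //=.
apply: leq_sum => p _; apply: leq_trans (card_avoiders_min_at p).
rewrite sum1dep_card; apply: subset_leq_card; apply/fintype.subsetP=> pi; rewrite !inE.
by case/andP=> -> /eqP <-; rewrite permKV.
Qed.

End OneDashPattern.

Local Open Scope ring_scope.

Section RealBounds.
Variable R : realType.

Lemma sum_geometric_le (r c : R) : 0 < c -> c < r -> forall n,
  \sum_(j < n.+1) r ^+ j * c ^+ (n - j)%N <= r ^+ n * (r / (r - c)).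
Proof.
move=> c0 cr; have rc0 : 0 < r - c by rewrite subr_gt0.
have q1 : 1 <= r / (r - c) by rewrite ler_pdivlMr // mul1r lerBlDr lerDl ltW.
elim=> [|n IH]; first by rewrite big_ord_recr big_ord0 /= add0r expr0 !mul1r.
rewrite big_ord_recr /= subnn expr0 mulr1.
have -> : \sum_(j < n.+1) r ^+ j * c ^+ (n.+1 - widen_ord (leqnSn n.+1) j)
        = c * \sum_(j < n.+1) r ^+ j * c ^+ (n - j)%N.
  rewrite mulr_sumr; apply: eq_bigr => j _ /=.
  rewrite subSn; last by rewrite -ltnS.
  by rewrite exprS mulrCA.
apply: (@le_trans _ _ (c * (r ^+ n * (r / (r - c))) + r ^+ n.+1)).
  by rewrite lerD2r ler_pM2l.
have -> : c * (r ^+ n * (r / (r - c))) + r ^+ n.+1 = r ^+ n.+1 * (r / (r - c)).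
  by rewrite exprS; field; rewrite lt0r_neq0.
by [].
Qed.

Lemma bernoulli_le (x : R) n : 0 <= x -> 1 + n%:R * x <= (1 + x) ^+ n.
Proof.
move=> x0; elim: n => [|n IH]; first by rewrite mul0r addr0 expr0.
rewrite exprS -natr1.
have : 0 <= (n%:R : R) by rewrite ler0n.
nra.
Qed.

Lemma exprnK_powR (y : R) n : (0 < n)%N -> 0 <= y -> (y ^+ n) `^ n%:R^-1 = y.
Proof.
move=> n0 y0; rewrite -powR_mulrn // -powRrM mulfV ?powRr1 //.
by rewrite pnatr_eq0 -lt0n.
Qed.

Lemma powR_inv_le (x y : R) n : (0 < n)%N -> 0 <= x -> 0 <= y -> x <= y ^+ n ->
  x `^ n%:R^-1 <= y.
Proof.
move=> n0 x0 y0 xy; rewrite -(exprnK_powR n0 y0).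
by apply: ge0_ler_powR => //; rewrite nnegrE exprn_ge0.
Qed.

Lemma powR_inv_le_linear (K : R) n : (0 < n)%N -> 1 <= K ->
  K `^ n%:R^-1 <= 1 + (K - 1) / n%:R.
Proof.
move=> n0 K1; have n0' : 0 < n%:R :> R by rewrite ltr0n.
have q : 0 <= (K - 1) / n%:R by rewrite divr_ge0 ?subr_ge0 // ltW.
apply: powR_inv_le => //; [lra | lra |].
apply: le_trans (bernoulli_le _ q).
by rewrite mulrCA mulfV ?mulr1 ?gt_eqF //; lra.
Qed.

Lemma powR_inv_le_geometric (x K r : R) n : (0 < n)%N -> 1 <= K -> 0 <= r ->
  0 <= x -> x <= K * r ^+ n -> x `^ n%:R^-1 <= r + (K - 1) * r / n%:R.
Proof.
move=> n0 K1 r0 x0 xK.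
have ninv : 0 <= n%:R^-1 :> R by rewrite invr_ge0 ler0n.
apply: (le_trans (ge0_ler_powR ninv x0 _ xK)).
  by rewrite nnegrE mulr_ge0 ?exprn_ge0 //; lra.
rewrite powRM ?exprn_ge0 //; last lra.
rewrite exprnK_powR //; apply: (le_trans (ler_wpM2r r0 (powR_inv_le_linear n0 K1))).
by rewrite le_eqVlt; apply/orP; left; apply/eqP; field; rewrite pnatr_eq0 -lt0n.
Qed.

(* Write [i = q m + j]: then [b i <= b m ^ q <= c ^ (q m)], and [c ^ (q m) <= c ^ (i - m)]
   because [c <= 1]. *)
Lemma submult_geometric_bound (b : nat -> R) (m : nat) (c : R) :
  (0 < m)%N -> 0 < c -> c <= 1 ->
  (forall n, 0 <= b n) -> (forall n, b n <= 1) ->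
  (forall p q, b (p + q)%N <= b p * b q) -> b m <= c ^+ m ->
  forall i, b i <= (c ^+ m)^-1 * c ^+ i.
Proof.
move=> m0 c0 c1 b0 b1 bM bm.
have bqm q j : b (q * m + j)%N <= c ^+ (q * m).
  elim: q => [|q IH]; first by rewrite mul0n add0n expr0.
  rewrite mulSn -addnA exprD.
  by apply: (le_trans (bM _ _)); apply: ler_pM.
move=> i; have := bqm (i %/ m)%N (i %% m)%N; rewrite -divn_eq => h.
have cm0 : 0 < c ^+ m by rewrite exprn_gt0.
rewrite ler_pdivlMl //; apply: (le_trans (ler_wpM2l (ltW cm0) h)).
rewrite -exprD; apply: ler_wiXn2l => //; first exact: ltW.
rewrite {1}(divn_eq i m) addnC leq_add2r; apply: ltnW; exact: ltn_pmod.
Qed.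

End RealBounds.

Section ConvolutionBound.
Variables (R : realType) (a b : nat -> R) (r c D : R).
Hypotheses (c_gt0 : 0 < c) (c_lt_r : c < r) (D_ge0 : 0 <= D).
Hypotheses (a_ge0 : forall n, 0 <= a n) (b_ge0 : forall n, 0 <= b n).
Hypothesis b_le_geometric : forall n, b n <= D * c ^+ n.
Hypothesis a_conv : forall n, n.+1%:R * a n.+1 <= \sum_(j < n.+1) a j * b (n - j)%N.

Let r_gt0 : 0 < r. Proof. exact: lt_trans c_lt_r. Qed.

(* Once [n + 1] exceeds [D r / (r - c) / r], the convolution of two geometric
   bounds is absorbed by the factor [n + 1]. *)
Lemma conv_geometric_step K n : 0 <= K ->
  D * (r / (r - c)) <= r * n.+1%:R ->
  (forall i, (i <= n)%N -> a i <= K * r ^+ i) -> a n.+1 <= K * r ^+ n.+1.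
Proof.
move=> K0 large IH.
have n1 : 0 < n.+1%:R :> R by rewrite ltr0n.
rewrite -(ler_pM2l n1); apply: (le_trans (a_conv n)).
apply: (@le_trans _ _ (K * D * \sum_(j < n.+1) r ^+ j * c ^+ (n - j))).
  rewrite mulr_sumr; apply: ler_sum => i _.
  rewrite (_ : K * D * (r ^+ i * c ^+ (n - i)%N) =
               (K * r ^+ i) * (D * c ^+ (n - i)%N)); last by ring.
  by apply: ler_pM => //; apply: IH; rewrite -ltnS.
apply: (@le_trans _ _ (K * D * (r ^+ n * (r / (r - c))))).
  by apply: ler_wpM2l; [exact: mulr_ge0 | exact: sum_geometric_le].
rewrite (_ : K * D * (r ^+ n * (r / (r - c))) = K * r ^+ n * (D * (r / (r - c))));
  last by ring.
rewrite (_ : n.+1%:R * (K * r ^+ n.+1) = K * r ^+ n * (r * n.+1%:R));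
  last by rewrite exprS; ring.
by apply: ler_wpM2l => //; rewrite mulr_ge0 ?exprn_ge0 // ltW.
Qed.

Lemma conv_geometric_bound : exists2 K, 1 <= K & forall n, a n <= K * r ^+ n.
Proof.
set S := D * (r / (r - c)).
have S_ge0 : 0 <= S by rewrite mulr_ge0 // divr_ge0 ?ltW // subr_gt0.
set N := Num.bound (S / r).
have SN : S <= r * N%:R.
  have := archi_boundP (divr_ge0 S_ge0 (ltW r_gt0)).
  by move/ltW; rewrite ler_pdivrMr // mulrC.
set K := 1 + \sum_(j < N.+1) a j / r ^+ j.
have term_ge0 j : 0 <= a j / r ^+ j by rewrite divr_ge0 // exprn_ge0 // ltW.
have K1 : 1 <= K by rewrite lerDl sumr_ge0.
exists K => // n; elim/ltn_ind: n => n IH.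
case: (leqP n N) => [nN | Nn].
  have nN' : (n < N.+1)%N by [].
  rewrite -ler_pdivrMr ?exprn_gt0 // /K (bigD1 (Ordinal nN')) //= addrCA lerDl.
  by rewrite addr_ge0 ?sumr_ge0.
case: n IH Nn => // m IH Nm.
apply: conv_geometric_step; first exact: le_trans ler01 K1.
  by apply: (le_trans SN); rewrite ler_pM2l // ler_nat ltnW.
by move=> i im; apply: IH; rewrite ltnS.
Qed.

End ConvolutionBound.

Section GrowthRates.
Variables (R : realType) (a b : nat -> R).
Hypotheses (b_ge0 : forall n, 0 <= b n) (b_le_a : forall n, b n <= a n).
Hypotheses (b_le1 : forall n, b n <= 1).
Hypothesis b_submult : forall p q, b (p + q)%N <= b p * b q.
Hypothesis a_conv : forall n, n.+1%:R * a n.+1 <= \sum_(j < n.+1) a j * b (n - j)%N.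

Let a_ge0 n : 0 <= a n. Proof. exact: le_trans (b_ge0 n) (b_le_a n). Qed.

Let roots := [set x : R | exists2 n, (0 < n)%N & x = b n `^ n%:R^-1]%classic.
Let L := inf roots.

Let roots_neq0 : (roots !=set0)%classic.
Proof. by exists (b 1%N `^ 1%:R^-1); exists 1%N. Qed.

Let roots_lbound : has_lbound roots.
Proof. by exists 0 => x [n _ ->]; exact: powR_ge0. Qed.

Let L_ge0 : 0 <= L.
Proof. by apply: lb_le_inf => // x [n _ ->]; exact: powR_ge0. Qed.

Let L_le_root n : (0 < n)%N -> L <= b n `^ n%:R^-1.
Proof. by move=> n0; apply: ge_inf => //; exists n. Qed.

Lemma exists_geometric_point r : L < r ->
  exists c m, [/\ 0 < c, c < r, c <= 1, (0 < m)%N & b m <= c ^+ m].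
Proof.
move=> Lr; have L0 := L_ge0; set c := Num.min 1 ((L + r) / 2).
have c0 : 0 < c by rewrite lt_min ltr01 /=; lra.
have c1 : c <= 1 by rewrite ge_min lexx.
have cr : c < r by rewrite gt_min; apply/orP; right; lra.
exists c; case: (ltP L 1) => L1.
  have Lc : L < c by rewrite lt_min L1 /=; lra.
  case: (inf_lt roots_neq0 Lc) => _ [m m0 ->] lt; exists m; split => //.
  have m0' : 0 < m%:R :> R by rewrite ltr0n.
  have := gt0_ltr_powR m0' (powR_ge0 (b m) m%:R^-1) (ltW c0) lt.
  by rewrite -powRrM mulVf ?gt_eqF // powRr1 // powR_mulrn ?(ltW c0) // => /ltW.
exists 1%N; split => //; rewrite expr1 le_min b_le1 /=.
by apply: (le_trans (b_le1 1%N)); lra.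
Qed.

Lemma a_geometric_bound r : L < r -> exists2 K, 1 <= K & forall n, a n <= K * r ^+ n.
Proof.
case/exists_geometric_point=> c [m [c0 cr c1 m0 bm]].
have b_geom := submult_geometric_bound m0 c0 c1 b_ge0 b_le1 b_submult bm.
apply: (conv_geometric_bound c0 cr _ a_ge0 b_ge0 b_geom a_conv).
by rewrite invr_ge0 exprn_ge0 // ltW.
Qed.

Lemma root_a_le_eventually e : 0 < e ->
  exists N, forall n, (N <= n)%N -> a n `^ n%:R^-1 <= L + e.
Proof.
move=> e0; have L0 := L_ge0; set r := L + e / 2.
have [K K1 aK] := a_geometric_bound (ltac:(rewrite /r; lra) : L < r).
have r0 : 0 <= r by rewrite /r; lra.
set q := (K - 1) * r / (e / 2).
have q0 : 0 <= q by rewrite /q divr_ge0 ?mulr_ge0 //; lra.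
exists (Num.bound q) => n qn.
have n0 : (0 < n)%N.
  by apply: leq_trans qn; rewrite -(ltr_nat R) (le_lt_trans q0) ?archi_boundP.
apply: (le_trans (powR_inv_le_geometric n0 K1 r0 (a_ge0 n) (aK n))).
suff : (K - 1) * r / n%:R <= e / 2 by rewrite /r; lra.
have qn' : q <= n%:R.
  by apply/ltW/(lt_le_trans (archi_boundP q0)); rewrite ler_nat.
move: qn'; rewrite /q ler_pdivrMr; last lra.
by rewrite ler_pdivrMr ?ltr0n // [_ * n%:R]mulrC.
Qed.

Lemma growth_rates_cvg : exists L : R,
  ((fun n => a n `^ n%:R^-1) @ \oo --> L)%classic /\
  ((fun n => b n `^ n%:R^-1) @ \oo --> L)%classic.
Proof.
have ninv n : 0 <= n%:R^-1 :> R by rewrite invr_ge0 ler0n.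
have root_b_le_a n : b n `^ n%:R^-1 <= a n `^ n%:R^-1.
  by apply: (ge0_ler_powR (ninv n)); rewrite ?nnegrE.
have squeeze (x : nat -> R) : (forall n, (0 < n)%N -> L <= x n) ->
    (forall n, x n <= a n `^ n%:R^-1) -> (x @ \oo --> L)%classic.
  move=> xL xa; apply/cvgrPdist_le => e e0.
  have [N HN] := root_a_le_eventually e0.
  exists N.+1 => // n /= Nn.
  have := xL n (leq_trans (ltn0Sn N) Nn); have := le_trans (xa n) (HN n (ltnW Nn)).
  by rewrite ler_norml; lra.
exists L; split; apply: squeeze => // n n0.
exact: le_trans (L_le_root n0) (root_b_le_a n).
Qed.

End GrowthRates.

Section AlphaRatio.
Variable R : realType.

Definition alpha_ratio m (pat : 'I_m -> nat) (dash : nat -> bool) n : R :=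
  (alpha n pat dash)%:R / (n`!)%:R.

Let natr_fact_gt0 n : 0 < (n`!)%:R :> R. Proof. by rewrite ltr0n fact_gt0. Qed.

Lemma alpha_ratio_ge0 m (pat : 'I_m -> nat) dash n : 0 <= alpha_ratio pat dash n.
Proof. by rewrite divr_ge0 // ltW. Qed.

Lemma alpha_ratio_le1 m (pat : 'I_m -> nat) dash n : alpha_ratio pat dash n <= 1.
Proof. by rewrite ler_pdivrMr // mul1r ler_nat alpha_le_fact. Qed.

Lemma alpha_ratio_submult m (pat : 'I_m -> nat) dash p q :
  alpha_ratio pat dash (p + q) <= alpha_ratio pat dash p * alpha_ratio pat dash q.
Proof.
have fact_split : (p + q)`! = 'C(p + q, p) * (p`! * q`!).
  by rewrite -(bin_fact (leq_addr q p)) addKn.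
have C0 : 0 < ('C(p + q, p))%:R :> R by rewrite ltr0n bin_gt0 leq_addr.
rewrite /alpha_ratio fact_split natrM.
apply: (@le_trans _ _ (('C(p + q, p) * alpha p pat dash * alpha q pat dash)%:R /
                       ('C(p + q, p)%:R * (p`! * q`!)%:R))).
  by rewrite ler_pM2r ?ler_nat ?alpha_submult // invr_gt0 mulr_gt0 // ltr0n muln_gt0 !fact_gt0.
by rewrite !natrM le_eqVlt; apply/orP; left; apply/eqP; field; rewrite !gt_eqF.
Qed.

Lemma alpha_ratio_consec_le_one_dash k (s : 'S_k) n :
  alpha_ratio (consec s) no_dash n <= alpha_ratio (one_dash_pat s) one_dash n.
Proof. by rewrite ler_pM2r ?invr_gt0 // ler_nat alpha_consec_le_one_dash. Qed.

Lemma alpha_ratio_one_dash_rec k (s : 'S_k) n :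
  n.+1%:R * alpha_ratio (one_dash_pat s) one_dash n.+1 <=
  \sum_(j < n.+1) alpha_ratio (one_dash_pat s) one_dash j *
                  alpha_ratio (consec s) no_dash (n - j).
Proof.
rewrite /alpha_ratio factS natrM invfM mulrCA mulVKf ?pnatr_eq0 //.
apply: (@le_trans _ _ ((\sum_(p < n.+1) 'C(n, p) * alpha p (one_dash_pat s) one_dash *
                 alpha (n - p) (consec s) no_dash)%:R / (n`!)%:R)).
  by rewrite ler_pM2r ?invr_gt0 // ler_nat alpha_one_dash_rec.
rewrite natr_sum mulr_suml le_eqVlt; apply/orP; left; apply/eqP.
apply: eq_bigr => j _.
rewrite -(bin_fact (ltnSE (ltn_ord j))) !natrM.
by field; rewrite !gt_eqF // ltr0n bin_gt0 -ltnS.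
Qed.

End AlphaRatio.

(* The argument works for every [k]. *)
Theorem mainTheorem4 (R : realType) (k : nat) (hk : (3 <= k)%N) (s : 'S_k) :
  exists L : R,
    (growth_seq R (fun n => alpha n (one_dash_pat s) one_dash) @ \oo --> L)%classic /\
    (growth_seq R (fun n => alpha n (consec s) no_dash) @ \oo --> L)%classic.
Proof.
exact: (growth_rates_cvg (@alpha_ratio_ge0 R _ _ _)
  (@alpha_ratio_consec_le_one_dash R _ s) (@alpha_ratio_le1 R _ _ _)
  (@alpha_ratio_submult R _ _ _) (@alpha_ratio_one_dash_rec R _ s)).
Qed.
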